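(* In the $\ell^1$ linear social choice setting, the pure stable lottery rule $f_{\mathrm{PSLR}}$ has worst-case distortion $\mathrm{D}(f_{\mathrm{PSLR}})=O(d)$.
   Context: Setting ($\ell^1$ linear social choice). Fix a dimension $d\ge 1$ and let $\Delta_d=\{x\in\mathbb{R}^d_{\ge 0}:\sum_i x^i=1\}$. An instance consists of a finite set $V$ of $n$ voters and a finite set $C$ of $m$ candidates, each a vector in $\Delta_d$, with every voter vector in $\mathrm{Cone}(C)$ (nonnegative linear combinations of candidate vectors). Utility: $u_v(c)=v^\top c$. Each voter reports a ranking of $C$ consistent with its utilities (ties broken arbitrarily); $\sigma$ is the profile. $\mathrm{UW}(c)=\sum_{v\in V}u_v(c)$. A randomized voting rule outputs a distribution over $C$ based only on the profile (neither voter nor candidate vectors are seen). Distortion on an instance: $\max_c\mathrm{UW}(c)/\mathbb{E}_{c\sim f}[\mathrm{UW}(c)]$; $\mathrm{D}(f)$ is the supremum over all instances, as a function of $d$. Stable lottery: for a committee $W\subseteq C$ and $c\in C$, $S_c(W)$ is the set of voters ranking $c$ above every member of $W$; a distribution $\mathcal W$ over committees of size $k$ is a stable lottery if $\mathbb{E}_{W\sim\mathcal W}[|S_c(W)|]\le n/k$ for all $c\in C$ (such lotteries exist for every profile). Pure stable lottery rule $f_{\mathrm{PSLR}}$: given a stable lottery $\mathcal W$ over committees of size $2d$, choose each $c\in C$ with probability $\frac{1}{2d}\Pr_{W\sim\mathcal W}[c\in W]$. *)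

From mathcomp Require Import all_boot all_order all_algebra.
From mathcomp Require Import all_fingroup.
From mathcomp Require Import reals.
Set Implicit Arguments. Unset Strict Implicit. Unset Printing Implicit Defensive.
Import Order.TTheory GRing.Theory Num.Theory.
Local Open Scope ring_scope.

Section L1SocialChoice.
Variables (R : realType) (d n m : nat).

Notation vec := {ffun 'I_d -> R}.

Definition in_simplex (x : vec) : Prop :=
  (forall i, 0 <= x i) /\ \sum_(i < d) x i = 1.

Definition in_cone (cand : 'I_m -> vec) (v : vec) : Prop :=
  exists lam : 'I_m -> R, (forall c, 0 <= lam c) /\
    forall i, v i = \sum_(c < m) lam c * cand c i.

Definition util (v c : vec) : R := \sum_(i < d) v i * c i.

Definition UW (vot : 'I_n -> vec) (cand : 'I_m -> vec) (c : 'I_m) : R :=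
  \sum_(v < n) util (vot v) (cand c).

(* A profile: voter v's ranking is the bijection sigma v : C -> positions,
   position 0 = top; (sigma v c < sigma v c') means v ranks c above c'. *)
Definition consistent (vot : 'I_n -> vec) (cand : 'I_m -> vec)
    (sigma : 'I_n -> {perm 'I_m}) : Prop :=
  forall v c c', (sigma v c < sigma v c')%N ->
    util (vot v) (cand c') <= util (vot v) (cand c).

Definition Sc (sigma : 'I_n -> {perm 'I_m}) (W : {set 'I_m}) (c : 'I_m)
    : {set 'I_n} :=
  [set v | [forall w in W, (sigma v c < sigma v w)%N]].

Definition stable_lottery (sigma : 'I_n -> {perm 'I_m}) (k : nat)
    (p : {ffun {set 'I_m} -> R}) : Prop :=
  [/\ forall W, 0 <= p W,
      \sum_(W : {set 'I_m}) p W = 1,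
      forall W, p W != 0 -> #|W| = k &
      forall c, \sum_(W : {set 'I_m}) p W * (#|Sc sigma W c|)%:R
                  <= n%:R / k%:R ].

Definition pslr (p : {ffun {set 'I_m} -> R}) (c : 'I_m) : R :=
  ((2 * d)%N%:R)^-1 * \sum_(W : {set 'I_m} | c \in W) p W.

Definition expected_UW (vot : 'I_n -> vec) (cand : 'I_m -> vec)
    (p : {ffun {set 'I_m} -> R}) : R :=
  \sum_(c < m) pslr p c * UW vot cand c.

End L1SocialChoice.

(* Fix a committee W. Every voter either ranks c below some member of W, so
   its utility for c is at most its total utility for W, or lies in S_c(W),
   and then its utility for c is at most 1; hence
   UW(c) <= sum_(w in W) UW(w) + |S_c(W)|. Averaging over a stable lottery gives UW(c) <= 2d E + n/(2d), where E is
   the expected welfare of f_PSLR. On the other hand, with V the sum of the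
   voter vectors, UW(c) = <V, c>, and since voters lie in the cone (hence the
   convex hull) of the candidates, n B >= sum_v <V, v> = |V|^2 >= n^2/d by
   Cauchy-Schwarz, where B = max_c UW(c). So n/(2d) <= B/2, and the bound at
   the best candidate yields B <= 4d E. *)
From mathcomp Require Import all_boot all_order all_algebra all_fingroup reals.
From mathcomp Require Import ring lra.
Set Implicit Arguments. Unset Strict Implicit. Unset Printing Implicit Defensive.
Import Order.TTheory GRing.Theory Num.Theory.
Local Open Scope ring_scope.

Lemma sqr_sum_le_card_sum_sqr (R : realFieldType) (k : nat) (x : 'I_k -> R) :
  (\sum_(i < k) x i) ^+ 2 <= k%:R * \sum_(i < k) x i ^+ 2.
Proof.
case: k x => [x | k x]; first by rewrite !big_ord0 expr0n mul0r.
set S := \sum_i x i; set Q := \sum_i x i ^+ 2.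
have expand : \sum_i (k.+1%:R * x i - S) ^+ 2 = k.+1%:R * (k.+1%:R * Q - S ^+ 2).
  under eq_bigr do rewrite sqrrB exprMn -mulrA.
  rewrite big_split sumrB /= sumrMnl -mulr_suml -!mulr_sumr sumr_const card_ord.
  by rewrite -/S -/Q; ring.
have dev_ge0 : 0 <= \sum_i (k.+1%:R * x i - S) ^+ 2.
  by apply: sumr_ge0 => i _; apply: sqr_ge0.
by rewrite expand pmulr_rge0 // subr_ge0 in dev_ge0.
Qed.

Section L1Instance.
Variables (R : realType) (d n m : nat).
Variables (vot : 'I_n -> {ffun 'I_d -> R}) (cand : 'I_m -> {ffun 'I_d -> R}).
Hypotheses (cand_simplex : forall c, in_simplex (cand c))
  (vot_simplex : forall v, in_simplex (vot v)).

Lemma coord_le1 (x : {ffun 'I_d -> R}) i : in_simplex x -> x i <= 1.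
Proof.
case=> x_ge0 <-; rewrite (bigD1 i) //= lerDl.
by apply: sumr_ge0 => j _; apply: x_ge0.
Qed.

Lemma util_ge0 v c : 0 <= util (vot v) (cand c).
Proof.
apply: sumr_ge0 => i _.
by apply: mulr_ge0; [case: (vot_simplex v) | case: (cand_simplex c)].
Qed.

Lemma util_le1 v c : util (vot v) (cand c) <= 1.
Proof.
case: (vot_simplex v) => vot_ge0 <-; apply: ler_sum => i _.
by rewrite -[leRHS]mulr1 ler_wpM2l ?coord_le1.
Qed.

Lemma UW_ge0 c : 0 <= UW vot cand c.
Proof. by apply: sumr_ge0 => v _; apply: util_ge0. Qed.

Section Committee.
Variables (sigma : 'I_n -> {perm 'I_m}).
Hypothesis sigma_consistent : consistent vot cand sigma.

Lemma util_le_committee (W : {set 'I_m}) c v :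
  util (vot v) (cand c) <=
  \sum_(w in W) util (vot v) (cand w) + (v \in Sc sigma W c)%:R.
Proof.
have [vS | vNS] := boolP (v \in Sc sigma W c).
  by rewrite -[leLHS]add0r lerD ?util_le1 //; apply: sumr_ge0 => *; apply: util_ge0.
rewrite addr0.
have [w wW w_le_c] : exists2 w, w \in W & (sigma v w <= sigma v c)%N.
  move: vNS; rewrite inE => /forallPn [w]; rewrite negb_imply -leqNgt.
  by case/andP=> wW w_le_c; exists w.
have c_le_w : util (vot v) (cand c) <= util (vot v) (cand w).
  move: w_le_c; rewrite leq_eqVlt => /orP [/eqP sigma_wc | /sigma_consistent //].
  by rewrite (perm_inj (val_inj sigma_wc)).
apply: (le_trans c_le_w); rewrite (bigD1 w) //= lerDl.
by apply: sumr_ge0 => j _; apply: util_ge0.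
Qed.

Lemma UW_le_committee (W : {set 'I_m}) c :
  UW vot cand c <= \sum_(w in W) UW vot cand w + #|Sc sigma W c|%:R.
Proof.
rewrite /UW [X in _ <= X + _]exchange_big /= -sum1_card natr_sum.
rewrite [X in _ + X]big_mkcond -big_split /=; apply: ler_sum => v _.
by apply: le_trans (util_le_committee W c v) _; case: (v \in _).
Qed.

Lemma committee_sum_expected_UW (p : {ffun {set 'I_m} -> R}) :
  (0 < d)%N ->
  \sum_(W : {set 'I_m}) p W * \sum_(w in W) UW vot cand w
  = (2 * d)%N%:R * expected_UW vot cand p.
Proof.
move=> d_gt0; have k_neq0 : (2 * d)%N%:R != 0 :> R.
  by rewrite pnatr_eq0 -lt0n muln_gt0 d_gt0.
rewrite /expected_UW /pslr mulr_sumr.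
under [RHS]eq_bigr do rewrite !mulrA mulfV // mul1r mulr_suml.
under [LHS]eq_bigr do rewrite mulr_sumr big_mkcond /=.
rewrite exchange_big /=; apply: eq_bigr => c _; rewrite [RHS]big_mkcond /=.
by apply: eq_bigr => W _; case: (c \in W).
Qed.

Lemma UW_le_stable_lottery (p : {ffun {set 'I_m} -> R}) c :
  (0 < d)%N -> stable_lottery sigma (2 * d) p ->
  UW vot cand c <= (2 * d)%N%:R * expected_UW vot cand p + n%:R / (2 * d)%N%:R.
Proof.
move=> d_gt0 [p_ge0 p_sum1 _ p_stable].
rewrite -committee_sum_expected_UW //.
have -> : UW vot cand c = \sum_(W : {set 'I_m}) p W * UW vot cand c.
  by rewrite -mulr_suml p_sum1 mul1r.
apply: le_trans (_ : \sum_(W : {set 'I_m}) p W *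
   (\sum_(w in W) UW vot cand w + #|Sc sigma W c|%:R) <= _).
  by apply: ler_sum => W _; apply: ler_wpM2l => //; apply: UW_le_committee.
under eq_bigr do rewrite mulrDr.
by rewrite big_split lerD.
Qed.

End Committee.

Lemma cone_weights_sum1 x : in_cone cand x -> in_simplex x ->
  exists lam : 'I_m -> R, [/\ forall c, 0 <= lam c, \sum_(c < m) lam c = 1 &
    forall i, x i = \sum_(c < m) lam c * cand c i].
Proof.
move=> [lam [lam_ge0 x_eq]] [_ x_sum1]; exists lam; split=> //.
rewrite -x_sum1; under [RHS]eq_bigr do rewrite x_eq.
rewrite exchange_big; apply: eq_bigr => c _.
by rewrite -mulr_sumr (proj2 (cand_simplex c)) mulr1.
Qed.

Lemma util_cone_le (y x : {ffun 'I_d -> R}) B :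
  (forall c, util y (cand c) <= B) -> in_cone cand x -> in_simplex x ->
  util y x <= B.
Proof.
move=> y_le_B x_cone x_simplex.
have [lam [lam_ge0 lam_sum1 x_eq]] := cone_weights_sum1 x_cone x_simplex.
rewrite -[leRHS]mul1r -lam_sum1 mulr_suml /util.
under eq_bigr do rewrite x_eq mulr_sumr.
rewrite exchange_big; apply: ler_sum => c _.
have -> : \sum_i y i * (lam c * cand c i) = lam c * util y (cand c).
  by rewrite mulr_sumr; apply: eq_bigr => i _; rewrite mulrCA.
by rewrite ler_wpM2l.
Qed.

Lemma sqr_voters_le_max_UW B :
  (forall v, in_cone cand (vot v)) -> (forall c, UW vot cand c <= B) ->
  n%:R ^+ 2 <= d%:R * (n%:R * B).
Proof.
move=> vot_cone UW_le_B.
pose V : {ffun 'I_d -> R} := [ffun i => \sum_(v < n) vot v i].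
have UW_util c : UW vot cand c = util V (cand c).
  rewrite /UW /util exchange_big; apply: eq_bigr => i _.
  by rewrite ffunE mulr_suml.
have V_sum : \sum_(i < d) V i = n%:R.
  under eq_bigr do rewrite ffunE.
  rewrite exchange_big /=; under eq_bigr do rewrite (proj2 (vot_simplex _)).
  by rewrite sumr_const card_ord.
have V_norm : \sum_(i < d) V i ^+ 2 = \sum_(v < n) util V (vot v).
  rewrite exchange_big /=; apply: eq_bigr => i _.
  by rewrite expr2 {2}ffunE mulr_sumr.
rewrite -{1}V_sum; apply: le_trans (sqr_sum_le_card_sum_sqr V) _.
rewrite ler_wpM2l // V_norm.
rewrite mulr_natl -[n in B *+ n]card_ord -sumr_const; apply: ler_sum => v _.
by apply: util_cone_le => // c; rewrite -UW_util.
Qed.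

End L1Instance.

Lemma le_mul4_of_half_bound (R : realFieldType) (k n B E : R) : 0 < k ->
  n <= k * B -> B <= 2 * k * E + n / (2 * k) -> B <= 4 * k * E.
Proof.
move=> k_gt0 n_le B_le.
have : n / (2 * k) <= B / 2.
  rewrite ler_pdivrMr ?mulr_gt0 //.
  by have -> : B / 2 * (2 * k) = k * B by field.
lra.
Qed.

Theorem theorem9 :
  exists K : nat,
  forall (R : realType) (d n m : nat)
         (vot : 'I_n -> {ffun 'I_d -> R}) (cand : 'I_m -> {ffun 'I_d -> R})
         (sigma : 'I_n -> {perm 'I_m}) (p : {ffun {set 'I_m} -> R}),
    (0 < d)%N ->
    injective cand ->
    (forall c, in_simplex (cand c)) ->
    (forall v, in_simplex (vot v)) ->
    (forall v, in_cone cand (vot v)) ->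
    consistent vot cand sigma ->
    stable_lottery sigma (2 * d) p ->
    forall c : 'I_m,
      UW vot cand c <= (K * d)%N%:R * expected_UW vot cand p.
Proof.
exists 4%N => R d n m vot cand sigma p d_gt0 _ cand_simplex vot_simplex
  vot_cone sigma_consistent p_stable c.
pose best := [arg max_(b > c) UW vot cand b]%O.
have UW_le_best c' : UW vot cand c' <= UW vot cand best.
  by rewrite /best; case: arg_maxP => // b _ b_max; apply: b_max.
have n_le : n%:R <= d%:R * UW vot cand best.
  have sqr_le := sqr_voters_le_max_UW cand_simplex vot_simplex vot_cone UW_le_best.
  have [n_gt0 | n_le0] := ltrP 0 (n%:R : R).
    by rewrite mulrCA expr2 ler_pM2l in sqr_le.
  by apply: le_trans n_le0 _; rewrite mulr_ge0 ?(UW_ge0 cand_simplex vot_simplex).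
have best_le := UW_le_stable_lottery cand_simplex vot_simplex sigma_consistent
  best d_gt0 p_stable.
rewrite natrM in best_le; rewrite natrM.
apply: le_trans (UW_le_best c) (le_mul4_of_half_bound _ n_le best_le).
by rewrite ltr0n.
Qed.
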